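(* Let $p$ be a prime, $q=p^r$, $n\ge1$, and let $l$ be an integer with $1\le l\le 2r-1$. Let $\mathscr{C}\subseteq\mathrm{GF}(q^2)^n$ be a scalable code and $\mathscr{B}$ a basis of $\mathrm{GF}(q^2)$ over $\mathrm{GF}(q)$. If there is a power of two which divides $r$ but does not divide $l$, then $\mathrm{Im}_{\mathscr{B}}(\mathscr{C})$ is self-orthogonal w.r.t. $\tilde h_l(x,y)=\sum_{i=1}^{2n}x_iy_i^{p^l}$ on $\mathrm{GF}(q)^{2n}$ if and only if $\mathrm{Tr}(\mathscr{C})$ is self-orthogonal w.r.t. $h_l(x,y)=\sum_{i=1}^n x_iy_i^{p^l}$ on $\mathrm{GF}(q)^n$.
   Context: $\mathrm{Tr}:\mathrm{GF}(q^2)\to\mathrm{GF}(q)$, $\mathrm{Tr}(a)=a+a^q$. The dual basis of a basis $\{\gamma_1,\gamma_2\}$ is the unique basis $\{\beta_1,\beta_2\}$ with $\mathrm{Tr}(\gamma_i\beta_j)=\delta_{ij}$. A code $\mathscr{C}\subseteq\mathrm{GF}(q^2)^n$ is scalable if $x\in\mathscr{C}\Rightarrow\alpha x\in\mathscr{C}$ for all $\alpha\in\mathrm{GF}(q^2)$. For a basis $\mathscr{B}$ with dual basis $\{\beta_1,\beta_2\}$, $\mathrm{Im}_{\mathscr{B}}(\mathscr{C})=\{(\mathrm{Tr}(\beta_1x_1),\ldots,\mathrm{Tr}(\beta_1x_n),\mathrm{Tr}(\beta_2x_1),\ldots,\mathrm{Tr}(\beta_2x_n)):x\in\mathscr{C}\}$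 and $\mathrm{Tr}(\mathscr{C})=\{(\mathrm{Tr}(x_1),\ldots,\mathrm{Tr}(x_n)):x\in\mathscr{C}\}$. A code $D$ is self-orthogonal w.r.t. a form $g$ if $g(x,y)=0$ for all $x,y\in D$. *)

From HB Require Import structures.
From mathcomp Require Import all_boot all_order all_algebra all_field.
Set Implicit Arguments. Unset Strict Implicit. Unset Printing Implicit Defensive.
Import GRing.Theory.
Local Open Scope ring_scope.

(* K plays the role of GF(q^2); GF(q) is the subfield {a | a^q = a} of K. *)
Definition inGFq (K : finFieldType) (q : nat) (a : K) : bool := a ^+ q == a.

Definition trq (K : finFieldType) (q : nat) (a : K) : K := a + a ^+ q.

(* {g1, g2} is a basis of K over GF(q) (K has dimension 2 over GF(q)) *)
Definition is_basis2 (K : finFieldType) (q : nat) (g1 g2 : K) : Prop :=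
  forall a b : K, inGFq q a -> inGFq q b -> a * g1 + b * g2 = 0 -> a = 0 /\ b = 0.

Definition is_dual_basis (K : finFieldType) (q : nat) (g1 g2 b1 b2 : K) : Prop :=
  [/\ trq q (g1 * b1) = 1, trq q (g1 * b2) = 0,
      trq q (g2 * b1) = 0 & trq q (g2 * b2) = 1].

Definition scalable_code (K : finFieldType) (n : nat) (C : {set 'rV[K]_n}) : Prop :=
  forall (alpha : K) (x : 'rV[K]_n), x \in C -> alpha *: x \in C.

(* Im_B(C), with {b1,b2} the dual basis of B *)
Definition ImB (K : finFieldType) (q n : nat) (b1 b2 : K) (C : {set 'rV[K]_n})
  : {set 'rV[K]_(n + n)} :=
  [set row_mx (map_mx (fun a => trq q (b1 * a)) x)
              (map_mx (fun a => trq q (b2 * a)) x) | x in C].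

Definition TrC (K : finFieldType) (q n : nat) (C : {set 'rV[K]_n}) : {set 'rV[K]_n} :=
  [set map_mx (trq q) x | x in C].

Definition hform (K : finFieldType) (p l m : nat) (x y : 'rV[K]_m) : K :=
  \sum_(i < m) x 0 i * (y 0 i) ^+ (p ^ l).

Definition self_orth (K : finFieldType) (p l m : nat) (D : {set 'rV[K]_m}) : Prop :=
  forall x y, x \in D -> y \in D -> hform p l x y = 0.

From HB Require Import structures.
From mathcomp Require Import all_boot all_order all_algebra all_field.
From mathcomp Require Import ring.
Set Implicit Arguments. Unset Strict Implicit. Unset Printing Implicit Defensive.
Import GRing.Theory.
Local Open Scope ring_scope.

(* Write Tr(b x) for the vector (Tr(b x_i))_i and x^q for (x_i^q)_i.  Expanding the trace,
   h_l(Tr(b x), Tr(b y)) = Tr(b^(1+p^l) h_l(x,y) + b^(1+q p^l) h_l(x,y^q)),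
   so Tr(C) (b = 1) and Im_B(C) (summing over b = b1, b2) are self-orthogonal iff
   Tr(c h_l(x,y) + d h_l(x,y^q)) = 0 on C, with c = d = 1, resp.
   c = b1^(1+p^l) + b2^(1+p^l) and d = b1^(1+p^(r+l)) + b2^(1+p^(r+l)).
   When c, d <> 0, replacing x, y by a x, b y (C is scalable) and using that the trace form
   is nondegenerate turns this into h_l(x,y) = h_l(x,y^q) = 0 on C, independently of B.
   If c were 0, t = b1/b2 would satisfy t^(1+p^l) = -1, hence be fixed by the Frobenius
   powers p^(2l) and p^(2r), so by p^(2 gcd(l,r)); the 2-adic hypothesis makes 2 gcd(l,r)
   divide r, so t would lie in GF(q), contradicting duality.  Likewise d <> 0 with r + l
   in place of l. *)

Section IteratedFrobenius.
Variables (F : fieldType) (p : nat).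
Hypothesis pcharFp : p \in [pchar F].

Lemma pchar_nat_expn m : [pchar F].-nat (p ^ m)%N.
Proof. by rewrite (eq_pnat _ (pcharf_eq pcharFp)) pnatX pnat_id ?(pcharf_prime pcharFp). Qed.

Lemma expr0_pchar_expn m : (0 : F) ^+ (p ^ m)%N = 0.
Proof. by rewrite expr0n expn_eq0 eqn0Ngt prime_gt0 ?(pcharf_prime pcharFp). Qed.

Lemma exprD_pchar_expn m (a b : F) : (a + b) ^+ (p ^ m)%N = a ^+ (p ^ m)%N + b ^+ (p ^ m)%N.
Proof. exact: exprDn_pchar (pchar_nat_expn m). Qed.

Lemma exprN_pchar_expn m (a : F) : (- a) ^+ (p ^ m)%N = - a ^+ (p ^ m)%N.
Proof. exact: exprNn_pchar (pchar_nat_expn m). Qed.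

Lemma expr_pchar_expn_inj m : injective (fun a : F => a ^+ (p ^ m)%N).
Proof.
move=> a b /= /eqP; rewrite -subr_eq0 -exprN_pchar_expn -exprD_pchar_expn.
by rewrite expf_eq0 subr_eq0 => /andP[_ /eqP].
Qed.

Lemma expr_expnM_fixed (t : F) a j : t ^+ (p ^ a)%N = t -> t ^+ (p ^ (a * j))%N = t.
Proof.
move=> fix_a; elim: j => [|j IHj]; first by rewrite muln0 expr1.
by rewrite mulnS expnD exprM fix_a.
Qed.

Lemma expr_expn_fixed_gcd (t : F) a b : (0 < a)%N ->
  t ^+ (p ^ a)%N = t -> t ^+ (p ^ b)%N = t -> t ^+ (p ^ gcdn a b)%N = t.
Proof.
move=> a_gt0 fix_a fix_b; have [u _ /dvdnP[j def_j]] := Bezoutl b a_gt0.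
apply: (@expr_pchar_expn_inj (u * b)); rewrite /= -exprM -expnD def_j.
by rewrite mulnC [(u * b)%N]mulnC !expr_expnM_fixed.
Qed.

Lemma expr_expn_double_fixed (t : F) m : t * t ^+ (p ^ m)%N = -1 -> t ^+ (p ^ m.*2)%N = t.
Proof.
move=> tN1; have t_neq0 : t != 0.
  by apply/eqP=> t0; move/eqP: tN1; rewrite t0 mul0r eq_sym oppr_eq0 oner_eq0.
have tX : t ^+ (p ^ m)%N = - t^-1 by apply: (mulfI t_neq0); rewrite tN1 mulrN mulfV.
by rewrite -addnn expnD exprM tX exprN_pchar_expn exprVn tX invrN invrK opprK.
Qed.

End IteratedFrobenius.

Lemma dvdn_double_gcdn r m k : (0 < r)%N -> (2 ^ k %| r)%N -> ~~ (2 ^ k %| m)%N ->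
  ((gcdn m r).*2 %| r)%N.
Proof.
move=> r_gt0 kr km; have g_gt0 : (0 < gcdn m r)%N by rewrite gcdn_gt0 r_gt0 orbT.
have def_r := divnK (dvdn_gcdr m r); set g := gcdn m r in g_gt0 def_r *.
rewrite -def_r -mul2n dvdn_pmul2r // dvdn2; apply: contra km => odd_r.
have cop : coprime (2 ^ k) (r %/ g) by apply: coprimeXl; rewrite coprime2n.
by move: kr; rewrite -def_r mulnC Gauss_dvdl // => /dvdn_trans->; rewrite ?dvdn_gcdl.
Qed.

Section HForm.
Variables (K : finFieldType) (p l : nat).

Lemma hformZ n a b (x y : 'rV[K]_n) :
  hform p l (a *: x) (b *: y) = a * b ^+ (p ^ l)%N * hform p l x y.
Proof. by rewrite /hform mulr_sumr; apply: eq_bigr => i _; rewrite !mxE exprMn; ring. Qed.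

Lemma hform_row_mx n (x1 x2 y1 y2 : 'rV[K]_n) :
  hform p l (row_mx x1 x2) (row_mx y1 y2) = hform p l x1 y1 + hform p l x2 y2.
Proof.
by rewrite /hform big_split_ord; congr (_ + _); apply: eq_bigr => i _;
  rewrite ?row_mxEl ?row_mxEr.
Qed.

Lemma self_orth_imset m n (f : 'rV[K]_n -> 'rV[K]_m) (C : {set 'rV[K]_n}) :
  self_orth p l (f @: C) <->
  (forall x y, x \in C -> y \in C -> hform p l (f x) (f y) = 0).
Proof.
split=> [orthC x y xC yC | orthC _ _ /imsetP[x xC ->] /imsetP[y yC ->]].
  exact: orthC (imset_f f xC) (imset_f f yC).
exact: orthC.
Qed.

End HForm.

Section TraceForm.
Variables (K : finFieldType) (p r : nat).
Hypothesis pcharKp : p \in [pchar K].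
Hypothesis card_K : #|K| = ((p ^ r) ^ 2)%N.
Local Notation q := (p ^ r)%N.
Local Notation Tr := (trq q).
Local Notation conj_mx x := (map_mx (fun a : K => a ^+ q) x).

Lemma exprqK (a : K) : (a ^+ q) ^+ q = a.
Proof. by rewrite -exprM mulnn -card_K expf_card. Qed.

Lemma trq0 : Tr (0 : K) = 0.
Proof. by rewrite /trq (expr0_pchar_expn pcharKp) addr0. Qed.

Lemma trqD (a b : K) : Tr (a + b) = Tr a + Tr b.
Proof. by rewrite /trq (exprD_pchar_expn pcharKp) addrACA. Qed.

Lemma trq_sum I (s : seq I) (P : pred I) (G : I -> K) :
  Tr (\sum_(i <- s | P i) G i) = \sum_(i <- s | P i) Tr (G i).
Proof. exact: (big_morph _ trqD trq0). Qed.

Lemma trqMl (c a : K) : c ^+ q = c -> Tr (c * a) = c * Tr a.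
Proof. by move=> fix_c; rewrite /trq exprMn fix_c mulrDr. Qed.

Lemma trq_mul_expr l (u v : K) :
  Tr u * Tr v ^+ (p ^ l)%N = Tr (u * v ^+ (p ^ l)%N + u * (v ^+ q) ^+ (p ^ l)%N).
Proof.
rewrite /trq !(exprD_pchar_expn pcharKp) !exprMn.
rewrite [(v ^+ q ^+ _) ^+ q]exprAC exprqK [(v ^+ _) ^+ q]exprAC; ring.
Qed.

Lemma hform_trq_map l n (b : K) (x y : 'rV[K]_n) :
  hform p l (map_mx (fun a => Tr (b * a)) x) (map_mx (fun a => Tr (b * a)) y) =
  Tr (b * b ^+ (p ^ l)%N * hform p l x y
      + b * (b ^+ q) ^+ (p ^ l)%N * hform p l x (conj_mx y)).
Proof.
rewrite /hform !mulr_sumr -big_split /= trq_sum; apply: eq_bigr => i _.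
by rewrite !mxE trq_mul_expr; congr Tr; rewrite !exprMn; ring.
Qed.

Lemma conj_mxZ n (b : K) (y : 'rV[K]_n) : conj_mx (b *: y) = b ^+ q *: conj_mx y.
Proof. by apply/matrixP=> i j; rewrite !mxE exprMn. Qed.

Lemma expr_expn_norm_fixed m k (t : K) :
  (0 < r)%N -> (2 ^ k %| r)%N -> ~~ (2 ^ k %| m)%N ->
  t * t ^+ (p ^ m)%N = -1 -> t ^+ q = t.
Proof.
move=> r_gt0 kr km tN1; have m_gt0 : (0 < m)%N by case: m km tN1; rewrite ?dvdn0.
have fix_2m := expr_expn_double_fixed pcharKp tN1.
have fix_2r : t ^+ (p ^ r.*2)%N = t by rewrite -addnn expnD exprM exprqK.
have := expr_expn_fixed_gcd pcharKp _ fix_2m fix_2r.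
rewrite -!mul2n -muln_gcdr muln_gt0 m_gt0 => /(_ isT) fix_gcd.
have /dvdnP[j ->] := dvdn_double_gcdn r_gt0 kr km.
by rewrite mulnC -mul2n expr_expnM_fixed.
Qed.

Lemma norm_expn_neq0 m k (b1 b2 : K) :
  (0 < r)%N -> (2 ^ k %| r)%N -> ~~ (2 ^ k %| m)%N ->
  b2 != 0 -> (forall t, t ^+ q = t -> b1 != t * b2) ->
  b1 * b1 ^+ (p ^ m)%N + b2 * b2 ^+ (p ^ m)%N != 0.
Proof.
move=> r_gt0 kr km b2_neq0 b1_indep; apply/eqP => norm0.
have [t b1_def] : exists t, b1 = t * b2 by exists (b1 / b2); rewrite divfK.
subst b1; have /eqP : (t * t ^+ (p ^ m)%N + 1) * (b2 * b2 ^+ (p ^ m)%N) = 0.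
  by rewrite -norm0 exprMn; ring.
have b2N_neq0 : b2 * b2 ^+ (p ^ m)%N != 0 by rewrite mulf_neq0 ?expf_neq0.
rewrite mulf_eq0 (negbTE b2N_neq0) orbF addr_eq0 => /eqP tN1.
by move/eqP: (b1_indep _ (expr_expn_norm_fixed r_gt0 kr km tN1)).
Qed.

Lemma basis2_ratio_notin (g1 g2 : K) : is_basis2 q g1 g2 -> (g1 / g2) ^+ q != g1 / g2.
Proof.
have in0 : inGFq q (0 : K) by rewrite /inGFq (expr0_pchar_expn pcharKp).
have in1 : inGFq q (1 : K) by rewrite /inGFq expr1n.
move=> basisB; have g2_neq0 : g2 != 0.
  apply/eqP => g20; have [_ /eqP] : (0 : K) = 0 /\ (1 : K) = 0.
    by apply: basisB => //; rewrite g20 mulr0 mul0r addr0.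
  by rewrite oner_eq0.
apply/eqP => fix_g; have inNg : inGFq q (- (g1 / g2)).
  by rewrite /inGFq (exprN_pchar_expn pcharKp) fix_g.
have [/eqP] : (1 : K) = 0 /\ - (g1 / g2) = 0.
  by apply: basisB => //; rewrite mul1r mulNr divfK ?subrr.
by rewrite oner_eq0.
Qed.

Lemma dual_basis_neq0 (g1 g2 b1 b2 : K) : is_dual_basis q g1 g2 b1 b2 -> b2 != 0.
Proof.
case=> _ _ _ Tr_g2b2; apply/eqP => b20.
by move/eqP: Tr_g2b2; rewrite b20 mulr0 trq0 eq_sym oner_eq0.
Qed.

Lemma dual_basis_indep (g1 g2 b1 b2 : K) :
  is_dual_basis q g1 g2 b1 b2 -> forall t, t ^+ q = t -> b1 != t * b2.
Proof.
case=> Tr_g1b1 Tr_g1b2 _ _ t fix_t; apply/eqP => b1_def.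
by move/eqP: Tr_g1b1; rewrite b1_def mulrCA trqMl // Tr_g1b2 mulr0 eq_sym oner_eq0.
Qed.

Variable g : K.
Hypothesis g_notin : g ^+ q != g.

Lemma trq_nondegenerate (s : K) : (forall a, Tr (a * s) = 0) -> s = 0.
Proof.
move=> Tr_s0; apply: contraTeq g_notin => s_neq0; rewrite negbK; apply/eqP.
have Tr1 : (1 : K) + 1 = 0 by rewrite -(Tr_s0 s^-1) mulVf // /trq expr1n.
have Trg : g + g ^+ q = 0 by rewrite -(Tr_s0 (g / s)) divfK.
have -> : g ^+ q = (g + g ^+ q) - g * (1 + 1) + g by ring.
by rewrite Trg Tr1 mulr0 subr0 add0r.
Qed.

Lemma expr_expn_separation l (u v : K) :
  (forall b, b ^+ (p ^ l)%N * u + (b ^+ q) ^+ (p ^ l)%N * v = 0) -> u = 0 /\ v = 0.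
Proof.
move=> sep; have u_def : u = - v.
  by apply/eqP; rewrite -addr_eq0 -[X in _ == X](sep 1) !expr1n !mul1r.
have /eqP := sep g; rewrite u_def mulrN addrC -mulrBl mulf_eq0 subr_eq0.
case/orP=> [/eqP/(expr_pchar_expn_inj pcharKp) g_fix | /eqP v0].
  by move: g_notin; rewrite g_fix eqxx.
by rewrite v0 oppr0.
Qed.

Lemma self_orth_trq_form l n (C : {set 'rV[K]_n}) (c d : K) :
  scalable_code C -> c != 0 -> d != 0 ->
  (forall x y, x \in C -> y \in C ->
     Tr (c * hform p l x y + d * hform p l x (conj_mx y)) = 0) <->
  (forall x y, x \in C -> y \in C ->
     hform p l x y = 0 /\ hform p l x (conj_mx y) = 0).
Proof.
move=> scalC c_neq0 d_neq0; split=> orthC x y xC yC; last first.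
  by have [-> ->] := orthC x y xC yC; rewrite !mulr0 addr0 trq0.
have sep b : b ^+ (p ^ l)%N * (c * hform p l x y)
             + (b ^+ q) ^+ (p ^ l)%N * (d * hform p l x (conj_mx y)) = 0.
  apply: trq_nondegenerate => a; rewrite -(orthC _ _ (scalC a x xC) (scalC b y yC)).
  by rewrite conj_mxZ !hformZ; congr Tr; ring.
have [/eqP + /eqP] := expr_expn_separation sep.
by rewrite !mulf_eq0 (negbTE c_neq0) (negbTE d_neq0) => /eqP-> /eqP->.
Qed.

Lemma self_orth_ImB l n (C : {set 'rV[K]_n}) (b1 b2 : K) :
  scalable_code C ->
  b1 * b1 ^+ (p ^ l)%N + b2 * b2 ^+ (p ^ l)%N != 0 ->
  b1 * (b1 ^+ q) ^+ (p ^ l)%N + b2 * (b2 ^+ q) ^+ (p ^ l)%N != 0 ->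
  self_orth p l (ImB q b1 b2 C) <->
  (forall x y, x \in C -> y \in C ->
     hform p l x y = 0 /\ hform p l x (conj_mx y) = 0).
Proof.
move=> scalC c_neq0 d_neq0; rewrite -(self_orth_trq_form _ scalC c_neq0 d_neq0).
rewrite /ImB self_orth_imset; split=> orthC x y xC yC; rewrite -(orthC x y xC yC);
  by rewrite hform_row_mx !hform_trq_map -trqD; congr Tr; ring.
Qed.

Lemma self_orth_TrC l n (C : {set 'rV[K]_n}) :
  scalable_code C ->
  self_orth p l (TrC q C) <->
  (forall x y, x \in C -> y \in C ->
     hform p l x y = 0 /\ hform p l x (conj_mx y) = 0).
Proof.
move=> scalC; rewrite -(self_orth_trq_form _ scalC (oner_neq0 K) (oner_neq0 K)).
have Tr_mul1 (x : 'rV[K]_n) : map_mx Tr x = map_mx (fun a => Tr (1 * a)) x.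
  by apply/matrixP=> i j; rewrite !mxE mul1r.
rewrite /TrC self_orth_imset; split=> orthC x y xC yC; rewrite -(orthC x y xC yC);
  by rewrite !Tr_mul1 hform_trq_map !expr1n !mulr1.
Qed.

End TraceForm.

Unset Implicit Arguments.

Theorem corollary1 (p r n l : nat) (K : finFieldType)
  (hp : prime p) (hr : (0 < r)%N) (hcard : #|K| = ((p ^ r) ^ 2)%N)
  (hn : (1 <= n)%N) (hl : (1 <= l <= 2 * r - 1)%N)
  (C : {set 'rV[K]_n}) (hC : scalable_code C)
  (g1 g2 b1 b2 : K) (hB : is_basis2 (p ^ r) g1 g2)
  (hdual : is_dual_basis (p ^ r) g1 g2 b1 b2)
  (h2 : exists k : nat, (2 ^ k %| r)%N /\ ~~ (2 ^ k %| l)%N) :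
  self_orth p l (ImB (p ^ r) b1 b2 C) <-> self_orth p l (TrC (p ^ r) C).
Proof.
have pcharKp : p \in [pchar K] by apply: (card_finPcharP _ hp); rewrite hcard -expnM.
have g_notin := basis2_ratio_notin pcharKp hB.
have b2_neq0 := dual_basis_neq0 pcharKp hdual.
have b1_indep := dual_basis_indep hdual.
have [k [kr kl]] := h2.
have c_neq0 := norm_expn_neq0 pcharKp hcard hr kr kl b2_neq0 b1_indep.
have d_neq0 : b1 * (b1 ^+ (p ^ r)) ^+ (p ^ l) + b2 * (b2 ^+ (p ^ r)) ^+ (p ^ l) != 0.
  rewrite -!exprM -expnD; apply: (norm_expn_neq0 pcharKp hcard hr kr _ b2_neq0 b1_indep).
  by rewrite dvdn_addr.
rewrite (self_orth_ImB pcharKp hcard g_notin hC c_neq0 d_neq0).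
by rewrite (self_orth_TrC pcharKp hcard g_notin l hC).
Qed.
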